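(* Let $G,H$ be finite simple graphs. Then the Euler characteristic of the strong product is multiplicative: $\chi(G*H)=\chi(G)\,\chi(H)$.
   Context: The Euler characteristic of a finite simple graph is $\chi(G)=\sum_{k\ge0}(-1)^k f_k(G)$, where $f_k(G)$ is the number of complete subgraphs of $G$ with $k+1$ vertices. The strong product $G*H$ has vertex set $V(G)\times V(H)$, and two distinct vertices $(a,b),(c,d)$ are adjacent iff ($a=c$ or $a$ is adjacent to $c$ in $G$) and ($b=d$ or $b$ is adjacent to $d$ in $H$). *)

From mathcomp Require Import all_boot all_order all_algebra.
Set Implicit Arguments. Unset Strict Implicit. Unset Printing Implicit Defensive.
Import GRing.Theory Num.Theory.

Definition simple_graph (T : finType) (e : rel T) : Prop :=
  symmetric e /\ irreflexive e.

Definition is_clique (T : finType) (e : rel T) (A : {set T}) : bool :=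
  (A != set0) && [forall x in A, forall y in A, (x != y) ==> e x y].

Definition fvec (T : finType) (e : rel T) (k : nat) : nat :=
  #|[set A : {set T} | is_clique e A & #|A| == k.+1]|.

(* Euler characteristic chi(G) = sum_{k>=0} (-1)^k f_k(G); f_k = 0 for k >= |T|. *)
Definition euler_char (T : finType) (e : rel T) : int :=
  (\sum_(k < #|T|) (-1) ^+ k * (fvec e k)%:Z)%R.

Definition strong_prod (T U : finType) (e : rel T) (f : rel U) : rel (T * U) :=
  fun p q => (p != q) && ((p.1 == q.1) || e p.1 q.1) && ((p.2 == q.2) || f p.2 q.2).

From mathcomp Require Import all_boot all_order all_algebra.
Import GRing.Theory Num.Theory.
Local Open Scope ring_scope.

(* Write sgn n for (-1)^n.  Grouping the cliques of G by size, chi(G) is the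
   sum of - sgn |A| over all cliques A of G (euler_char_cliques).  A vertex
   set C of G * H is a clique iff both of its projections are cliques
   (clique_strong_prod), so grouping the cliques of G * H by their pair of
   projections (A, B) gives
     chi(G * H) = sum_(A, B cliques) - sum_(C | proj C = (A, B)) sgn |C|.
   The inner sum ranges over the subsets of A x B that cover both A and B;
   inclusion-exclusion over the uncovered parts Y of A and Z of B evaluates
   it to - sgn |A| * sgn |B| (sum_sgn_covering).  The only counting input is
   the alternating sum over the subsets of a finite set D, which is 1 if D
   is empty and 0 otherwise (sum_sgn_subsets).  Hence the double sum factors
   as chi(G) * chi(H). *)

Local Notation sgn n := ((-1) ^+ n : int).

(* Alternating sum over the subsets of D: it vanishes unless D is empty,
   since toggling a fixed element of D is a sign-reversing involution. *)
Lemma sum_sgn_subsets {T : finType} (D : {set T}) :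
  \sum_(X : {set T} | X \subset D) sgn #|X| = (D == set0)%:R.
Proof.
have [->|[x xD]] := set_0Vmem D.
  rewrite eqxx (big_pred1 set0) ?cards0 // => X /=.
  by rewrite subset0.
have /negbTE -> : D != set0 by apply/set0Pn; exists x.
pose toggle (X : {set T}) := if x \in X then X :\ x else x |: X.
have toggleK : involutive toggle.
  move=> X; rewrite /toggle; case: (boolP (x \in X)) => xX.
    by rewrite setD11 setD1K.
  by rewrite setU11 setU1K ?xX.
set S := \sum_(X | _) _.
suff : S = - S by move/eqP; rewrite -subr_eq0 opprK -mulr2n mulrn_eq0 => /eqP.
rewrite {1}/S (reindex_inj (inv_inj toggleK)) -sumrN.
apply: eq_big => [X|X _]; rewrite /toggle; case: ifP => xX.
- by rewrite subDset (setUidPr _) // sub1set.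
- by rewrite subUset sub1set xD.
- by rewrite (cardsD1 x X) xX exprS mulN1r opprK.
- by rewrite cardsU1 xX exprS mulN1r.
Qed.

Lemma sum_sgn_proper_subsets {T : finType} (D : {set T}) : D != set0 ->
  \sum_(X : {set T} | X \proper D) sgn #|X| = - sgn #|D|.
Proof.
move=> /negbTE D0; have := sum_sgn_subsets D.
rewrite (bigD1 D) //= D0 => /eqP; rewrite addrC addr_eq0 => /eqP <-.
by apply: eq_bigl => X; rewrite properEneq andbC.
Qed.

(* Alternating sum over the pairs (Y, Z) of subsets of A and B with Y = A or
   Z = B: the indicator of the disjunction is 1 minus the product of the
   indicators of Y != A and Z != B, and both resulting sums factor. *)
Lemma sum_sgn_cover_pairs {T U : finType} (A : {set T}) (B : {set U}) :
  A != set0 -> B != set0 ->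
  \sum_(Y : {set T} | Y \subset A) \sum_(Z : {set U} | Z \subset B)
     sgn #|Y| * sgn #|Z| * ((Y == A) || (Z == B))%:R = - (sgn #|A| * sgn #|B|).
Proof.
move=> A0 B0.
have split_ind (Y : {set T}) (Z : {set U}) :
    sgn #|Y| * sgn #|Z| * ((Y == A) || (Z == B))%:R
  = sgn #|Y| * sgn #|Z|
    - (if Y != A then sgn #|Y| else 0) * (if Z != B then sgn #|Z| else 0).
  by case: (Y == A); case: (Z == B); rewrite /= ?mulr0 ?mulr1 ?mul0r ?subr0 ?subrr.
under eq_bigr => Y _ do under eq_bigr => Z _ do rewrite split_ind.
under eq_bigr => Y _ do rewrite sumrB.
rewrite sumrB -!big_distrlr /= !sum_sgn_subsets (negbTE A0) mul0r sub0r.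
rewrite -!big_mkcondr.
under eq_bigl => Y do rewrite andbC -properEneq.
under [X in _ * X]eq_bigl => Z do rewrite andbC -properEneq.
by rewrite !sum_sgn_proper_subsets // mulrNN.
Qed.

Section Projections.
Context {T U : finType}.
Implicit Types (A Y : {set T}) (B Z : {set U}) (C : {set T * U}).

Lemma subsetX_proj A B C :
  (C \subset setX A B) = (fst @: C \subset A) && (snd @: C \subset B).
Proof.
apply/idP/andP => [/subsetP CAB | [/subsetP fA /subsetP sB]].
  by split; apply/subsetP => _ /imsetP [[a b] /CAB + ->]; rewrite in_setX => /andP [].
apply/subsetP => -[a b] abC.
by rewrite in_setX (fA _ (imset_f fst abC)) (sB _ (imset_f snd abC)).
Qed.

Lemma subsetX_avoid A B Y Z C :
  (C \subset setX (A :\: Y) (B :\: Z)) =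
  [&& C \subset setX A B, Y \subset ~: fst @: C & Z \subset ~: snd @: C].
Proof.
apply/subsetP/and3P => [CYZ | [/subsetP CAB /subsetP YC /subsetP ZC] [a b] abC].
  have CYZ' p : p \in C -> [&& p.1 \in A, p.1 \notin Y, p.2 \in B & p.2 \notin Z].
    by case: p => a b /CYZ; rewrite in_setX !inE => /andP [/andP [-> ->] /andP [-> ->]].
  split.
  - by apply/subsetP => -[a b] /CYZ' /and4P [aA _ bB _]; rewrite in_setX aA.
  - apply/subsetP => a aY; rewrite inE; apply/imsetP => -[p /CYZ' /and4P [_ + _ _] eqa].
    by rewrite -eqa aY.
  - apply/subsetP => b bZ; rewrite inE; apply/imsetP => -[p /CYZ' /and4P [_ _ _ +] eqb].
    by rewrite -eqb bZ.
have := CAB _ abC; rewrite !in_setX !inE => /andP [-> ->]; rewrite !andbT.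
apply/andP; split; apply/negP.
  by move=> /YC; rewrite inE (imset_f fst abC).
by move=> /ZC; rewrite inE (imset_f snd abC).
Qed.

(* Bookkeeping for exchanging the order of summation in
   sum_sgn_covering_expand: the constraints on a triple (C, Y, Z), read with
   C first or with (Y, Z) first. *)
Lemma covering_avoid A B Y Z C :
  [&& C \subset setX A B, Y \subset A :\: fst @: C & Z \subset B :\: snd @: C] =
  [&& Y \subset A, Z \subset B & C \subset setX (A :\: Y) (B :\: Z)].
Proof.
rewrite subsetX_avoid !setDE !subsetI.
by case: (Y \subset A); case: (Z \subset B); rewrite /= ?andbF.
Qed.

(* Inclusion-exclusion for a single C: C covers A and B iff C lies in A x B
   and the uncovered parts A \ fst C and B \ snd C are empty, and each
   emptiness indicator is an alternating sum by sum_sgn_subsets. *)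
Lemma covering_indicator A B C :
  (if (fst @: C == A) && (snd @: C == B) then sgn #|C| else 0) =
  \sum_(Y : {set T}) \sum_(Z : {set U})
    (if [&& C \subset setX A B, Y \subset A :\: fst @: C & Z \subset B :\: snd @: C]
     then sgn #|C| * sgn #|Y| * sgn #|Z| else 0).
Proof.
have [| /negP nCAB] := boolP (C \subset setX A B); last first.
  rewrite big1 => [|Y _]; last by rewrite big1.
  case: ifP => // /andP [/eqP eA /eqP eB]; case: nCAB.
  by rewrite subsetX_proj eA eB !subxx.
rewrite subsetX_proj => /andP [fA sB] /=.
transitivity (sgn #|C| * (\sum_(Y : {set T} | Y \subset A :\: fst @: C) sgn #|Y|)
                       * (\sum_(Z : {set U} | Z \subset B :\: snd @: C) sgn #|Z|)).
  rewrite !sum_sgn_subsets !setD_eq0 !eqEsubset fA sB /=.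
  by case: (A \subset _); case: (B \subset _); rewrite /= ?mulr1 ?mulr0.
rewrite (big_distrr (sgn #|C|)) big_distrlr big_mkcond /=; apply: eq_bigr => Y _.
case: ifP => _; last by rewrite big1.
by rewrite big_mkcond.
Qed.

(* Summing covering_indicator over C first (after exchanging the order of
   summation with covering_avoid) leaves, for each pair (Y, Z), the
   alternating sum over the subsets of (A \ Y) x (B \ Z). *)
Lemma sum_sgn_covering_expand A B :
  \sum_(C : {set T * U} | (fst @: C == A) && (snd @: C == B)) sgn #|C| =
  \sum_(Y : {set T} | Y \subset A) \sum_(Z : {set U} | Z \subset B)
     sgn #|Y| * sgn #|Z| * (setX (A :\: Y) (B :\: Z) == set0)%:R.
Proof.
rewrite big_mkcond; under eq_bigr => C _ do rewrite covering_indicator.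
rewrite exchange_big /=; under eq_bigr => Y _ do rewrite exchange_big /=.
rewrite [RHS]big_mkcond; apply: eq_bigr => Y _.
case YA: (Y \subset A) => /=; last first.
  by rewrite big1 // => Z _; rewrite big1 // => C _; rewrite covering_avoid YA.
rewrite [RHS]big_mkcond; apply: eq_bigr => Z _.
case ZB: (Z \subset B) => /=; last first.
  by rewrite big1 // => C _; rewrite covering_avoid YA ZB.
rewrite -sum_sgn_subsets big_distrr [RHS]big_mkcond /=; apply: eq_bigr => C _.
by rewrite covering_avoid YA ZB -mulrA mulrC.
Qed.

Lemma setX_eq0 A B : (setX A B == set0) = (A == set0) || (B == set0).
Proof. by rewrite -!cards_eq0 cardsX muln_eq0. Qed.

Lemma sum_sgn_covering A B : A != set0 -> B != set0 ->
  \sum_(C : {set T * U} | (fst @: C == A) && (snd @: C == B)) sgn #|C|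
    = - (sgn #|A| * sgn #|B|).
Proof.
move=> A0 B0; rewrite sum_sgn_covering_expand -(sum_sgn_cover_pairs A B A0 B0).
apply: eq_bigr => Y YA; apply: eq_bigr => Z ZB.
by rewrite setX_eq0 !setD_eq0 !eqEsubset YA ZB.
Qed.

Lemma sum_by_projections (P : pred {set T}) (Q : pred {set U}) (F : {set T * U} -> int) :
  \sum_(C : {set T * U} | P (fst @: C) && Q (snd @: C)) F C =
  \sum_(A | P A) \sum_(B | Q B)
     \sum_(C : {set T * U} | (fst @: C == A) && (snd @: C == B)) F C.
Proof.
rewrite pair_big (partition_big (fun C => (fst @: C, snd @: C)) (fun AB => P AB.1 && Q AB.2)) //=.
apply: eq_bigr => -[A B] /= /andP [PA QB]; apply: eq_bigl => C.
by rewrite xpair_eqE; case: eqP => [->|]; case: eqP => [->|]; rewrite ?PA ?QB ?andbF.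
Qed.

Lemma forall_pairs_proj (r1 : rel T) (r2 : rel U) C :
  [forall p in C, forall q in C, r1 p.1 q.1 && r2 p.2 q.2] =
  [forall a in fst @: C, forall c in fst @: C, r1 a c]
  && [forall b in snd @: C, forall d in snd @: C, r2 b d].
Proof.
apply/idP/andP => [/forall_inP rC | [/forall_inP r1C /forall_inP r2C]].
  split; apply/forall_inP => _ /imsetP [p pC ->];
    apply/forall_inP => _ /imsetP [q qC ->];
    by have /andP [] := forall_inP (rC p pC) q qC.
apply/forall_inP => p pC; apply/forall_inP => q qC.
rewrite (forall_inP (r1C _ (imset_f fst pC)) _ (imset_f fst qC)).
by rewrite (forall_inP (r2C _ (imset_f snd pC)) _ (imset_f snd qC)).
Qed.

End Projections.

Lemma cliqueE (T : finType) (e : rel T) (A : {set T}) :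
  is_clique e A = (A != set0) && [forall x in A, forall y in A, (x == y) || e x y].
Proof.
rewrite /is_clique.
by under eq_forallb => x do under eq_forallb => y do rewrite implyNb.
Qed.

Lemma euler_char_cliques (T : finType) (e : rel T) :
  euler_char e = \sum_(A : {set T} | is_clique e A) - sgn #|A|.
Proof.
rewrite /euler_char /fvec.
transitivity (\sum_(k < #|T|) \sum_(A : {set T})
   (if is_clique e A && (#|A| == k.+1)%N then (-1) ^+ k else 0 : int)).
  apply: eq_bigr => k _; rewrite -big_mkcond /= sumr_const.
  rewrite -mulr_natr; congr (_ * _).
  by rewrite natz cardsE.
rewrite exchange_big /= [RHS]big_mkcond /=; apply: eq_bigr => A _.
case cA: (is_clique e A); last by rewrite big1.
have A0 : (0 < #|A|)%N by rewrite card_gt0; case/andP: cA.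
have AT : (#|A|.-1 < #|T|)%N by rewrite prednK // max_card.
rewrite /= -big_mkcond /= (big_pred1 (Ordinal AT)) /=; last first.
  by move=> k /=; rewrite -(inj_eq val_inj) /=; apply/eqP/eqP => [->|->] //; rewrite (prednK A0).
by rewrite -[in RHS](prednK A0) exprS mulN1r opprK.
Qed.

Lemma strong_prod_refl {T U : finType} (e : rel T) (f : rel U) (p q : T * U) :
  (p == q) || strong_prod e f p q = ((p.1 == q.1) || e p.1 q.1) && ((p.2 == q.2) || f p.2 q.2).
Proof. by rewrite /strong_prod; case: eqVneq => [->|]; rewrite ?eqxx. Qed.

Lemma clique_strong_prod {T U : finType} (e : rel T) (f : rel U) (C : {set T * U}) :
  is_clique (strong_prod e f) C = is_clique e (fst @: C) && is_clique f (snd @: C).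
Proof.
rewrite !cliqueE !imset_eq0.
under eq_forallb => p do under eq_forallb => q do rewrite strong_prod_refl.
rewrite (forall_pairs_proj (fun a c => (a == c) || e a c) (fun b d => (b == d) || f b d)).
by case: (C != set0).
Qed.

Theorem mainTheorem5 (T U : finType) (e : rel T) (f : rel U) :
  simple_graph e -> simple_graph f ->
  euler_char (strong_prod e f) = (euler_char e * euler_char f)%R.
Proof.
move=> _ _.
rewrite !euler_char_cliques big_distrlr /=.
rewrite (eq_bigl _ _ (clique_strong_prod e f)) sum_by_projections.
apply: eq_bigr => A /andP [A0 _]; apply: eq_bigr => B /andP [B0 _].
by rewrite sumrN sum_sgn_covering // opprK mulrNN.
Qed.
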